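(* Let $M>0$, $\frac32\le p\le2$, and let $v$ be a solution on $[0,T)\times\mathbb{R}$ of the Cauchy problem \[ \partial_t^2v-\partial_s^2v+W(s)v=h(s)|\partial_t v|^p,\qquad v(0,s)=\varepsilon f(s),\ \partial_tv(0,s)=\varepsilon g(s), \] with $\varepsilon>0$, $f,g\ge0$, $g\not\equiv0$, $\operatorname{supp}f,\operatorname{supp}g\subset\{|s|\le R\}$. Let $\phi\in C^2(\mathbb{R})$ be a positive solution of $\big(-\partial_s^2+W(s)+\frac1{4M^2}\big)\phi=0$ on $\mathbb{R}$ satisfying $C^{-1}e^{s/(2M)}\le\phi(s)\le Ce^{s/(2M)}$ for all $s\in\mathbb{R}$, and set $\psi(t,s)=e^{-t/(2M)}\phi(s)$. Define \[ \mathcal F(t)=\frac12\int_0^t\int_{\mathbb{R}}h(s)|\partial_\tau v(\tau,s)|^p\psi(\tau,s)\,ds\,d\tau+\frac{\varepsilon}{2}\int_{\mathbb{R}}\phi(s)g(s)\,ds. \] Then for all $t\in[0,T)$, $0\le\mathcal F(t)\le\int_{\mathbb{R}}\psi(t,s)\partial_tv(t,s)\,ds$, and there is a constant $C>0$ independent of $\varepsilon$ such that \[ \mathcal F'(t)\ge \frac{C\,\mathcal F(t)^p}{(t+R)^{p-1}},\qquad t\in[0,T). \]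
   Context: Let $M>0$. The Regge–Wheeler coordinate is $s(r)=r+2M\ln(r-2M)$ for $r\in(2M,\infty)$; this is a strictly increasing bijection onto $\mathbb{R}$, and $r=r(s)$ denotes its inverse. Set $F(s)=1-\frac{2M}{r(s)}$, $h(s)=F(s)\,r(s)^{1-p}$ and $W(s)=\frac{2MF(s)}{r(s)^3}$. Solutions are classical, and by finite speed of propagation $v(t,\cdot)$ is supported in $\{|s|\le t+R\}$. *)

From Stdlib Require Import Reals Lra Classical ClassicalEpsilon.
Open Scope R_scope.

(* Riemann integral over [a,b] (Stdlib RiemannInt); 0 if not Riemann integrable. *)
Definition Rint (f : R -> R) (a b : R) : R :=
  match excluded_middle_informative
          (exists I : R, exists pr : Riemann_integrable f a b, RiemannInt pr = I) with
  | left H => proj1_sig (constructive_indefinite_description _ H)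
  | right _ => 0
  end.

Definition lim_pinfty (g : R -> R) (l : R) : Prop :=
  forall eps, 0 < eps -> exists A0, forall A, A0 < A -> Rabs (g A - l) < eps.

(* Integral over the whole real line: lim_{A->+oo} int_{-A}^{A} f
   (0 if the limit does not exist). *)
Definition RintR (f : R -> R) : R :=
  match excluded_middle_informative (exists l, lim_pinfty (fun A => Rint f (- A) A) l) with
  | left H => proj1_sig (constructive_indefinite_description _ H)
  | right _ => 0
  end.

(* x^p for x >= 0 and p > 0, with 0^p = 0 (Stdlib Rpower needs x > 0). *)
Definition rpow (x p : R) : R := if Rle_dec x 0 then 0 else Rpower x p.

(* derivative of f at x relative to the set D (one-sided at endpoints) *)
Definition derivable_within (D : R -> Prop) (f : R -> R) (x l : R) : Prop :=
  forall eps, 0 < eps -> exists delta, 0 < delta /\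
    forall y, D y -> y <> x -> Rabs (y - x) < delta ->
      Rabs ((f y - f x) / (y - x) - l) < eps.

Definition in_time (T t : R) : Prop := 0 <= t < T.

Definition cont_strip (T : R) (u : R -> R -> R) : Prop :=
  forall t s, in_time T t -> forall eps, 0 < eps -> exists delta, 0 < delta /\
    forall t' s', in_time T t' -> Rabs (t' - t) < delta -> Rabs (s' - s) < delta ->
      Rabs (u t' s' - u t s) < eps.

(* r is the inverse of the Regge-Wheeler coordinate s(r) = r + 2M ln(r - 2M) on (2M,oo) *)
Definition is_RW_inverse (M : R) (r : R -> R) : Prop :=
  forall s, 2 * M < r s /\ r s + 2 * M * ln (r s - 2 * M) = s.

Definition Ffun (M : R) (r : R -> R) (s : R) : R := 1 - 2 * M / r s.
Definition hfun (M p : R) (r : R -> R) (s : R) : R := Ffun M r s * Rpower (r s) (1 - p).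
Definition Wfun (M : R) (r : R -> R) (s : R) : R := 2 * M * Ffun M r s / (r s ^ 3).

Definition psi (M : R) (phi : R -> R) (t s : R) : R := exp (- t / (2 * M)) * phi s.

(* Classical (C^2) solution on [0,T) x R of
   v_tt - v_ss + W v = h |v_t|^p, v(0)=eps f, v_t(0)=eps g,
   with supp v(t,.) in {|s| <= t + R} (finite speed of propagation). *)
Definition is_solution (M p : R) (r : R -> R) (R0 eps : R) (f g : R -> R) (T : R)
  (v vt vs vtt vts vss : R -> R -> R) : Prop :=
  (forall t s, in_time T t ->
     derivable_within (in_time T) (fun x => v x s) t (vt t s) /\
     derivable_pt_lim (fun y => v t y) s (vs t s) /\
     derivable_within (in_time T) (fun x => vt x s) t (vtt t s) /\
     derivable_pt_lim (fun y => vt t y) s (vts t s) /\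
     derivable_pt_lim (fun y => vs t y) s (vss t s)) /\
  cont_strip T v /\ cont_strip T vt /\ cont_strip T vs /\
  cont_strip T vtt /\ cont_strip T vts /\ cont_strip T vss /\
  (forall t s, in_time T t ->
     vtt t s - vss t s + Wfun M r s * v t s = hfun M p r s * rpow (Rabs (vt t s)) p) /\
  (forall s, v 0 s = eps * f s /\ vt 0 s = eps * g s) /\
  (forall t s, in_time T t -> t + R0 < Rabs s -> v t s = 0).

Definition Fcal (M p : R) (r : R -> R) (phi g : R -> R) (eps : R)
  (vt : R -> R -> R) (t : R) : R :=
  / 2 * Rint (fun tau => RintR (fun s =>
            hfun M p r s * rpow (Rabs (vt tau s)) p * psi M phi tau s)) 0 t
  + eps / 2 * RintR (fun s => phi s * g s).

From Stdlib Require Import Reals Lra Ranalysis5 ClassicalEpsilon.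
From Coquelicot Require Import Coquelicot.
Open Scope R_scope.

(* With κ = 1/(2M), let G(t) = ∫ ψ ∂_t v, H(t) = ∫ ψ v and N(t) = ∫ h |∂_t v|^p ψ.
   Since ψ = e^{-κt} φ with φ'' = (W + κ²) φ, the equation and an integration by parts in s
   (v has compact support in s) give
       G' = -κ G + κ² H + N,      H' = -κ H + G.
   Thus (G + κH)' = N and (e^{2κt} (G - κH))' = e^{2κt} N >= 0; adding the two integrated
   identities and using ∫ φ f >= 0 gives 2G >= ∫_0^t N + G(0) = 2F.
   Moreover F' = N/2. Integrating Young's inequality
       h |x|^p >= p μ^{p-1} |x| - (p-1) μ^p h^{-1/(p-1)}
   against ψ and choosing μ optimally gives N >= (∫ ψ |∂_t v|)^p / B^{p-1} >= F^p / B^{p-1},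
   where B(t) = ∫_{|s| <= t+R} ψ h^{-1/(p-1)}. Finally B(t) <= K (t + R): away from the horizon
   h^{-1/(p-1)} <= r (1 + 2M)² and r <= s <= t + R, while near the horizon
   h^{-1/(p-1)} <= r (r/(r-2M))² grows like e^{-s/M} and ψ <= C e^{(s-t)/(2M)} leaves the
   factor e^{-(s+t)/(2M)}, bounded for s >= -(t + R). *)

Lemma Rint_RInt f a b : ex_RInt f a b -> Rint f a b = RInt f a b.
Proof.
  intros H. unfold Rint.
  destruct excluded_middle_informative as [E|E].
  - destruct (constructive_indefinite_description _ E) as [I [pr HI]]; simpl.
    rewrite <- HI. symmetry. apply RInt_Reals.
  - exfalso; apply E. exists (RiemannInt (ex_RInt_Reals_0 _ _ _ H)).
    exists (ex_RInt_Reals_0 _ _ _ H). reflexivity.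
Qed.

Lemma ex_RInt_continuity f a b : (forall x, continuity_pt f x) -> ex_RInt f a b.
Proof.
  intros H. apply (@ex_RInt_continuous R_CompleteNormedModule).
  intros x _. apply continuity_pt_filterlim, H.
Qed.

Lemma RInt_eq_0 f a b : (forall x, Rmin a b < x < Rmax a b -> f x = 0) -> RInt f a b = 0.
Proof.
  intros H. rewrite (RInt_ext f (fun _ => 0)) by auto.
  rewrite RInt_const. unfold scal; simpl. unfold mult; simpl. ring.
Qed.

Lemma RInt_support f L A : (forall x, continuity_pt f x) ->
  (forall x, L < Rabs x -> f x = 0) -> 0 <= L <= A ->
  RInt f (-A) A = RInt f (-L) L.
Proof.
  intros Hc Hz HL.
  rewrite <- (RInt_Chasles f (-A) (-L) A) by apply ex_RInt_continuity, Hc.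
  rewrite <- (RInt_Chasles f (-L) L A) by apply ex_RInt_continuity, Hc.
  rewrite (RInt_eq_0 f (-A) (-L)).
  2:{ intros x Hx. apply Hz. rewrite Rmin_left, Rmax_right in Hx by lra.
      rewrite Rabs_left by lra. lra. }
  rewrite (RInt_eq_0 f L A).
  2:{ intros x Hx. apply Hz. rewrite Rmin_left, Rmax_right in Hx by lra.
      rewrite Rabs_right by lra. lra. }
  unfold plus; simpl. ring.
Qed.

Lemma lim_pinfty_unique g l1 l2 : lim_pinfty g l1 -> lim_pinfty g l2 -> l1 = l2.
Proof.
  intros H1 H2. destruct (Req_dec l1 l2) as [E|E]; auto. exfalso.
  assert (He : 0 < Rabs (l1 - l2) / 2).
  { assert (E' : l1 - l2 <> 0) by lra. apply Rabs_pos_lt in E'; lra. }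
  destruct (H1 _ He) as [A1 HA1]. destruct (H2 _ He) as [A2 HA2].
  set (B := Rmax A1 A2 + 1).
  assert (h1 := HA1 B ltac:(unfold B; pose proof (Rmax_l A1 A2); lra)).
  assert (h2 := HA2 B ltac:(unfold B; pose proof (Rmax_r A1 A2); lra)).
  assert (Rabs (l1 - l2) <= Rabs (g B - l1) + Rabs (g B - l2)).
  { replace (l1 - l2) with (-(g B - l1) + (g B - l2)) by ring.
    eapply Rle_trans; [apply Rabs_triang|]. rewrite Rabs_Ropp. lra. }
  lra.
Qed.

Lemma RintR_support f L : (forall x, continuity_pt f x) ->
  (forall x, L < Rabs x -> f x = 0) -> 0 <= L -> RintR f = RInt f (-L) L.
Proof.
  intros Hc Hz HL.
  assert (Hlim : lim_pinfty (fun A => Rint f (-A) A) (RInt f (-L) L)).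
  { intros e He. exists L. intros A HA.
    rewrite Rint_RInt by apply ex_RInt_continuity, Hc.
    rewrite (RInt_support f L A) by (auto; lra). rewrite Rminus_diag, Rabs_R0. lra. }
  unfold RintR. destruct excluded_middle_informative as [E|E].
  - destruct (constructive_indefinite_description _ E) as [l Hl]; simpl.
    eapply lim_pinfty_unique; eauto.
  - exfalso; apply E; eauto.
Qed.

Lemma RInt_lincomb2 (f1 f2 : R -> R) a b al be : ex_RInt f1 a b -> ex_RInt f2 a b ->
  RInt (fun s => al * f1 s + be * f2 s) a b = al * RInt f1 a b + be * RInt f2 a b.
Proof.
  intros H1 H2.
  rewrite (RInt_ext _ (fun s => plus (scal al (f1 s)) (scal be (f2 s)))) by (intros; reflexivity).
  rewrite (RInt_plus (V := R_CompleteNormedModule)).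
  - rewrite !(RInt_scal (V := R_CompleteNormedModule)); auto.
  - apply (ex_RInt_scal (V := R_NormedModule)); auto.
  - apply (ex_RInt_scal (V := R_NormedModule)); auto.
Qed.

Lemma RInt_lincomb4 (f1 f2 f3 f4 : R -> R) a b c1 c2 c3 c4 :
  ex_RInt f1 a b -> ex_RInt f2 a b -> ex_RInt f3 a b -> ex_RInt f4 a b ->
  RInt (fun s => c1 * f1 s + c2 * f2 s + (c3 * f3 s + c4 * f4 s)) a b =
  c1 * RInt f1 a b + c2 * RInt f2 a b + (c3 * RInt f3 a b + c4 * RInt f4 a b).
Proof.
  intros H1 H2 H3 H4.
  assert (Hl : forall (fa fb : R -> R) ca cb, ex_RInt fa a b -> ex_RInt fb a b ->
             ex_RInt (fun s => ca * fa s + cb * fb s) a b).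
  { intros fa fb ca cb Ha Hb.
    apply (ex_RInt_plus (V := R_NormedModule));
      apply (ex_RInt_scal (V := R_NormedModule)); auto. }
  rewrite (RInt_ext _ (fun s => 1 * (c1 * f1 s + c2 * f2 s) + 1 * (c3 * f3 s + c4 * f4 s))).
  2:{ intros x _. rewrite !Rmult_1_l. reflexivity. }
  rewrite RInt_lincomb2, !RInt_lincomb2; auto. rewrite !Rmult_1_l. reflexivity.
Qed.

Lemma continuity_pt_ball g z : continuity_pt g z -> forall e, 0 < e ->
  exists d, 0 < d /\ forall z', Rabs (z' - z) < d -> Rabs (g z' - g z) < e.
Proof.
  intros H e He. destruct (H e He) as [d [Hd Hz]]. exists d; split; auto.
  intros z' Hz'. destruct (Req_dec z' z) as [E|E].
  - subst. rewrite Rminus_diag, Rabs_R0; lra.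
  - apply (Hz z'). split. split; [constructor| auto]. exact Hz'.
Qed.

Lemma ball_continuity_pt g z : (forall e, 0 < e ->
  exists d, 0 < d /\ forall z', Rabs (z' - z) < d -> Rabs (g z' - g z) < e) ->
  continuity_pt g z.
Proof.
  intros H e He. destruct (H e He) as [d [Hd Hz]]. exists d; split; auto.
  intros z' [_ Hz']. apply Hz. exact Hz'.
Qed.

Lemma derivable_pt_lim_continuity_pt f x l : derivable_pt_lim f x l -> continuity_pt f x.
Proof. intros H. apply (derivable_continuous_pt _ _ (exist _ l H)). Qed.

Lemma continuity_pt_ext_eq (f g : R -> R) x :
  (forall y, f y = g y) -> continuity_pt f x -> continuity_pt g x.
Proof. intros E H. apply (continuity_pt_locally_ext f g 1); auto; lra. Qed.

Lemma continuity_2d_pt_comp g f x y : continuity_pt g (f x y) -> continuity_2d_pt f x y ->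
  continuity_2d_pt (fun u v => g (f u v)) x y.
Proof.
  intros Hg Hf eps. destruct (continuity_pt_ball _ _ Hg eps (cond_pos eps)) as [d [Hd Hz]].
  destruct (Hf (mkposreal d Hd)) as [d2 H2]. exists d2. intros u v Hu Hv.
  apply Hz. apply (H2 u v Hu Hv).
Qed.

Lemma continuity_2d_pt_snd g x y : continuity_pt g y -> continuity_2d_pt (fun _ v => g v) x y.
Proof. intros H. apply (continuity_2d_pt_comp g (fun _ v => v)); auto. apply continuity_2d_pt_id2. Qed.

Lemma continuity_2d_pt_fst g x y : continuity_pt g x -> continuity_2d_pt (fun u _ => g u) x y.
Proof. intros H. apply (continuity_2d_pt_comp g (fun u _ => u)); auto. apply continuity_2d_pt_id1. Qed.

Lemma continuity_2d_pt_section F x y : continuity_2d_pt F x y -> continuity_pt (F x) y.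
Proof.
  intros H. apply ball_continuity_pt. intros e He. destruct (H (mkposreal e He)) as [d Hd].
  exists d; split; [apply cond_pos|]. intros z Hz. apply Hd; simpl; auto.
  rewrite Rminus_diag, Rabs_R0; apply cond_pos.
Qed.

Lemma continuity_2d_pt_locally_ext F G x y : continuity_2d_pt F x y ->
  locally_2d (fun u v => G u v = F u v) x y -> continuity_2d_pt G x y.
Proof.
  intros H [d Hd] eps. destruct (H eps) as [d2 H2].
  exists (mkposreal _ (Rmin_pos _ _ (cond_pos d) (cond_pos d2))). simpl. intros u v Hu Hv.
  rewrite (Hd u v), (Hd x y). apply H2; eapply Rlt_le_trans; eauto; apply Rmin_r.
  all: try (rewrite Rminus_diag, Rabs_R0; apply cond_pos).
  all: eapply Rlt_le_trans; eauto; apply Rmin_l.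
Qed.

Lemma cont_strip_section T u t s : cont_strip T u -> in_time T t -> continuity_pt (u t) s.
Proof.
  intros H Ht. apply ball_continuity_pt. intros e He. destruct (H t s Ht e He) as [d [Hd Hu]].
  exists d; split; auto. intros z Hz. apply Hu; auto. rewrite Rminus_diag, Rabs_R0; auto.
Qed.

(** A function on the strip [[0,T) x R] is extended to the plane by freezing time outside
    [[0,t1]]; this lets Coquelicot's results on jointly continuous functions apply. *)

Definition clamp (a b x : R) := Rmax a (Rmin b x).

Lemma clamp_in a b x : a <= b -> a <= clamp a b x <= b.
Proof. intros H; unfold clamp. split; [apply Rmax_l|]. apply Rmax_lub; auto. apply Rmin_l. Qed.

Lemma clamp_id a b x : a <= x <= b -> clamp a b x = x.
Proof. intros H; unfold clamp. rewrite Rmin_right by lra. rewrite Rmax_right; lra. Qed.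

Lemma clamp_lipschitz a b x y : Rabs (clamp a b x - clamp a b y) <= Rabs (x - y).
Proof.
  unfold clamp, Rmax, Rmin.
  repeat (destruct Rle_dec); unfold Rabs; repeat destruct Rcase_abs; lra.
Qed.

Lemma continuity_pt_clamp a b x : continuity_pt (clamp a b) x.
Proof.
  apply ball_continuity_pt. intros e He. exists e; split; auto. intros z Hz.
  eapply Rle_lt_trans; [apply clamp_lipschitz|]; auto.
Qed.

Lemma cont_strip_clamp T u t1 : cont_strip T u -> 0 <= t1 < T ->
  forall x y, continuity_2d_pt (fun a b => u (clamp 0 t1 a) b) x y.
Proof.
  intros H Ht x y eps.
  assert (Hin : in_time T (clamp 0 t1 x)). { pose proof (clamp_in 0 t1 x). unfold in_time; lra. }
  destruct (H _ y Hin eps (cond_pos eps)) as [d [Hd Hu]].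
  exists (mkposreal d Hd). simpl. intros a b Ha Hb. apply Hu; auto.
  - pose proof (clamp_in 0 t1 a). unfold in_time; lra.
  - eapply Rle_lt_trans; [apply clamp_lipschitz|]. auto.
Qed.

Lemma derivable_within_interior T f x l : derivable_within (in_time T) f x l -> 0 < x < T ->
  derivable_pt_lim f x l.
Proof.
  intros H Hx e He. destruct (H e He) as [d [Hd Hy]].
  assert (Hd' : 0 < Rmin d (Rmin x (T - x))) by (repeat apply Rmin_pos; lra).
  exists (mkposreal _ Hd'). simpl. intros h Hh0 Hh.
  pose proof (Rmin_l d (Rmin x (T - x))). pose proof (Rmin_r d (Rmin x (T - x))).
  pose proof (Rmin_l x (T - x)). pose proof (Rmin_r x (T - x)).
  apply Rabs_def2 in Hh as Hh'.
  replace h with (x + h - x) at 2 by ring.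
  apply Hy. unfold in_time; lra. lra. replace (x + h - x) with h by ring. lra.
Qed.

Lemma continuity_pt_RInt_param F a b u0 : (forall u s, continuity_2d_pt F u s) -> a <= b ->
  continuity_pt (fun u => RInt (F u) a b) u0.
Proof.
  intros HF Hab. apply ball_continuity_pt. intros e He.
  set (e' := e / (b - a + 1)).
  assert (He' : 0 < e') by (unfold e'; apply Rdiv_lt_0_compat; lra).
  destruct (uniform_continuity_2d F (u0 - 1) (u0 + 1) a b (fun x y _ _ => HF x y)
              (mkposreal e' He')) as [d Hd].
  exists (Rmin d 1). split. { apply Rmin_pos; [apply cond_pos|lra]. }
  intros z Hz. pose proof (Rmin_l d 1). pose proof (Rmin_r d 1).
  assert (Ex : forall u, ex_RInt (F u) a b).
  { intros u. apply ex_RInt_continuity. intros s. apply continuity_2d_pt_section, HF. }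
  rewrite <- (RInt_minus (V := R_CompleteNormedModule)) by auto.
  assert (Hb : Rabs (RInt (fun s => minus (F z s) (F u0 s)) a b) <= (b - a) * e').
  { apply (norm_RInt_le_const (V := R_NormedModule) (fun s => F z s - F u0 s) a b); auto.
    - intros s Hs. apply Rlt_le. apply (Hd u0 s z s); try lra.
      + assert (Hz1 : Rabs (z - u0) < 1) by lra. apply Rabs_def2 in Hz1; lra.
      + rewrite Rminus_diag, Rabs_R0; apply cond_pos.
    - apply (RInt_correct (V := R_CompleteNormedModule)).
      apply (ex_RInt_minus (V := R_NormedModule)); auto. }
  eapply Rle_lt_trans; [exact Hb|]. unfold e'.
  apply Rlt_le_trans with ((b - a + 1) * (e / (b - a + 1))).
  - apply Rmult_lt_compat_r; [apply He'|lra].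
  - right; field; lra.
Qed.

Lemma is_derive_RInt_strip (T : R) (F dF : R -> R -> R) t1 A x :
  (forall y s, 0 < y < T -> is_derive (fun u => F u s) y (dF y s)) ->
  (forall u s, continuity_2d_pt (fun a b => dF (clamp 0 t1 a) b) u s) ->
  (forall y s, 0 < y < T -> continuity_pt (F y) s) ->
  0 < x < t1 -> t1 < T ->
  is_derive (fun y => RInt (F y) (-A) A) x (RInt (dF x) (-A) A).
Proof.
  intros Hd Hc Hcs Hx Ht1.
  assert (E : RInt (fun s => Derive (fun u => F u s) x) (-A) A = RInt (dF x) (-A) A).
  { apply RInt_ext. intros s _. apply is_derive_unique, Hd. lra. }
  rewrite <- E. apply is_derive_RInt_param.
  - apply (locally_interval _ x 0 t1); simpl; try lra.
    intros y Hy1 Hy2 s _. exists (dF y s). apply Hd. lra.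
  - intros s _. apply (continuity_2d_pt_locally_ext (fun a b => dF (clamp 0 t1 a) b)); auto.
    exists (mkposreal _ (Rmin_pos _ _ (proj1 Hx) (ltac:(lra) : 0 < t1 - x))). simpl.
    intros u w Hu _. pose proof (Rmin_l x (t1 - x)). pose proof (Rmin_r x (t1 - x)).
    apply Rabs_def2 in Hu. rewrite clamp_id by lra. apply is_derive_unique, Hd. lra.
  - apply (locally_interval _ x 0 t1); simpl; try lra.
    intros y Hy1 Hy2. apply ex_RInt_continuity. intros s. apply Hcs. lra.
Qed.

Lemma derivable_pt_lim_locally_zero f x l d : 0 < d ->
  (forall y, Rabs (y - x) < d -> f y = 0) -> derivable_pt_lim f x l -> l = 0.
Proof.
  intros Hd Hf H. apply is_derive_Reals in H.
  assert (H' : is_derive (fun _ => 0) x l).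
  { apply (is_derive_ext_loc f); auto. exists (mkposreal d Hd). intros y Hy. apply Hf, Hy. }
  apply is_derive_unique in H'. rewrite <- H', Derive_const. reflexivity.
Qed.

Lemma derivable_within_right_zero T f x l d : 0 <= x < T -> 0 < d ->
  (forall y, in_time T y -> x <= y < x + d -> f y = 0) ->
  derivable_within (in_time T) f x l -> l = 0.
Proof.
  intros Hx Hd Hf H. destruct (Req_dec l 0) as [E|E]; auto. exfalso.
  assert (Hl : 0 < Rabs l) by (apply Rabs_pos_lt; auto).
  destruct (H _ Hl) as [d' [Hd' Hy]].
  pose proof (Rmin_l d' (Rmin (T - x) d)). pose proof (Rmin_r d' (Rmin (T - x) d)).
  pose proof (Rmin_l (T - x) d). pose proof (Rmin_r (T - x) d).
  set (m := Rmin d' (Rmin (T - x) d)) in *.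
  assert (Hm : 0 < m) by (repeat apply Rmin_pos; lra).
  assert (Hq := Hy (x + m / 2) ltac:(unfold in_time; lra) ltac:(lra)
                  ltac:(rewrite Rabs_right; lra)).
  rewrite !Hf in Hq by (unfold in_time; lra).
  replace ((0 - 0) / (x + m / 2 - x) - l) with (- l) in Hq by (field; lra).
  rewrite Rabs_Ropp in Hq. lra.
Qed.

Lemma Rpower_pos x a : 0 < Rpower x a.
Proof. unfold Rpower; apply exp_pos. Qed.

Lemma continuity_pt_Rpower x a : 0 < x -> continuity_pt (fun x => Rpower x a) x.
Proof.
  intros Hx. apply (derivable_continuous_pt _ _ (exist _ _ (derivable_pt_lim_power x a Hx))).
Qed.

Lemma Rpower_mult_self Y a : 0 < Y -> Rpower Y a * Y = Rpower Y (a + 1).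
Proof. intros H. rewrite Rpower_plus, Rpower_1; auto. Qed.

Lemma Rpower_div X Y a : 0 < X -> 0 < Y -> Rpower (X / Y) a = Rpower X a / Rpower Y a.
Proof.
  intros HX HY. unfold Rdiv. rewrite <- Rpower_mult_distr; auto; [|apply Rinv_0_lt_compat; auto].
  f_equal. unfold Rpower. rewrite ln_Rinv by auto. rewrite <- exp_Ropp. f_equal; ring.
Qed.

Lemma rpow_Rpower x p : 0 < x -> rpow x p = Rpower x p.
Proof. intros H; unfold rpow; destruct Rle_dec; lra. Qed.

Lemma rpow_nonpos x p : x <= 0 -> rpow x p = 0.
Proof. intros H; unfold rpow; destruct Rle_dec; lra. Qed.

Lemma rpow_ge_0 x p : 0 <= rpow x p.
Proof. unfold rpow; destruct Rle_dec; [lra|]. apply Rlt_le, Rpower_pos. Qed.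

Lemma continuity_pt_rpow x0 p : 0 < p -> continuity_pt (fun x => rpow x p) x0.
Proof.
  intros Hp. apply ball_continuity_pt. intros e He.
  destruct (Rle_dec x0 0) as [H0|H0].
  - exists (Rpower e (/ p)). split; [apply Rpower_pos|]. intros z Hz.
    rewrite (rpow_nonpos x0) by auto. rewrite Rminus_0_r.
    destruct (Rle_dec z 0). { rewrite rpow_nonpos, Rabs_R0 by auto. lra. }
    rewrite rpow_Rpower by lra. rewrite Rabs_right by (apply Rle_ge, Rlt_le, Rpower_pos).
    apply Rabs_def2 in Hz.
    replace e with (Rpower (Rpower e (/ p)) p).
    + apply Rlt_Rpower_l; lra.
    + rewrite Rpower_mult, Rinv_l by lra. apply Rpower_1; auto.
  - destruct (continuity_pt_ball _ _ (continuity_pt_Rpower x0 p ltac:(lra)) e He)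
      as [d [Hd Hz]].
    exists (Rmin d (x0 / 2)). split. { apply Rmin_pos; lra. }
    intros z Hzz. pose proof (Rmin_l d (x0/2)). pose proof (Rmin_r d (x0/2)).
    assert (Hq : Rabs (z - x0) < x0 / 2) by lra. apply Rabs_def2 in Hq.
    rewrite !rpow_Rpower by lra. apply Hz. lra.
Qed.

Lemma continuity_pt_rpow_abs p x : 0 < p -> continuity_pt (fun y => rpow (Rabs y) p) x.
Proof.
  intros Hp. apply (continuity_pt_comp Rabs (fun y => rpow y p)).
  - apply Rcontinuity_abs.
  - apply continuity_pt_rpow; auto.
Qed.

(** * Convexity of [x^p] and Young's inequality *)

Lemma Rpower_tangent_line p X Y : 1 < p -> 0 < X -> 0 < Y ->
  Rpower Y p + p * Rpower Y (p - 1) * (X - Y) <= Rpower X p.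
Proof.
  intros Hp HX HY.
  assert (EY : Rpower Y (p - 1) * Y = Rpower Y p).
  { rewrite Rpower_mult_self by auto. f_equal; ring. }
  set (c0 := p * Rpower Y (p - 1)).
  set (ph := fun x => Rpower x p - c0 * x).
  assert (Hm : forall c, Rmin Y X <= c <= Rmax Y X -> 0 < c).
  { intros c [Hc _]. apply Rlt_le_trans with (Rmin Y X); auto. apply Rmin_glb_lt; lra. }
  destruct (MVT_gen ph Y X (fun c => p * Rpower c (p - 1) - c0)) as [c [Hc Hmvt]].
  - intros x Hx. apply is_derive_Reals. apply derivable_pt_lim_minus.
    + apply derivable_pt_lim_power, Hm; lra.
    + replace c0 with (c0 * 1) at 2 by ring. apply derivable_pt_lim_scal, derivable_pt_lim_id.
  - intros x Hx. apply continuity_pt_minus.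
    + apply continuity_pt_Rpower, Hm; auto.
    + apply continuity_pt_scal, derivable_continuous_pt, derivable_pt_id.
  - (* [x^(p-1)] is increasing, so [ph'] has the sign of [X - Y] between [Y] and [X] *)
    assert (Hsign : 0 <= (Rpower c (p - 1) - Rpower Y (p - 1)) * (X - Y)).
    { destruct (Rle_dec Y X) as [HYX|HYX].
      - rewrite Rmin_left, Rmax_right in Hc by lra.
        assert (Rpower Y (p - 1) <= Rpower c (p - 1)) by (apply Rle_Rpower_l; lra).
        apply Rmult_le_pos; lra.
      - rewrite Rmin_right, Rmax_left in Hc by lra.
        assert (Rpower c (p - 1) <= Rpower Y (p - 1)) by (apply Rle_Rpower_l; lra).
        replace ((Rpower c (p - 1) - Rpower Y (p - 1)) * (X - Y)) with
          ((Rpower Y (p - 1) - Rpower c (p - 1)) * (Y - X)) by ring.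
        apply Rmult_le_pos; lra. }
    unfold ph, c0 in *. rewrite <- EY. nra.
Qed.

Lemma young_weighted p X hh ps mu : 1 < p -> 0 <= X -> 0 < hh -> 0 <= ps -> 0 < mu ->
  p * Rpower mu (p - 1) * (ps * X) - (p - 1) * Rpower mu p * (ps * Rpower hh (- / (p - 1)))
  <= hh * rpow X p * ps.
Proof.
  intros Hp HX Hh Hps Hmu.
  set (q := / (p - 1)).
  (* tangent line of [x^p] at the point [Y] where the two sides balance *)
  set (Y := mu * Rpower hh (- q)).
  assert (HY : 0 < Y) by (unfold Y; apply Rmult_lt_0_compat; auto; apply Rpower_pos).
  assert (EY : Rpower Y (p - 1) * Y = Rpower Y p)
    by (rewrite Rpower_mult_self by auto; f_equal; ring).
  assert (Ht : Rpower Y p + p * Rpower Y (p - 1) * (X - Y) <= rpow X p).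
  { destruct (Req_dec X 0) as [->|E].
    - rewrite rpow_nonpos by lra. rewrite <- EY.
      assert (0 < Rpower Y (p - 1) * Y) by (apply Rmult_lt_0_compat; auto; apply Rpower_pos).
      nra.
    - rewrite rpow_Rpower by lra. apply Rpower_tangent_line; lra. }
  assert (E1 : hh * Rpower Y (p - 1) = Rpower mu (p - 1)).
  { unfold Y. rewrite <- Rpower_mult_distr by (auto; apply Rpower_pos).
    rewrite Rpower_mult. replace (- q * (p - 1)) with (- (1)) by (unfold q; field; lra).
    rewrite Rpower_Ropp, Rpower_1 by auto. field. lra. }
  assert (E2 : hh * Rpower Y p = Rpower mu p * Rpower hh (- q)).
  { unfold Y. rewrite <- Rpower_mult_distr by (auto; apply Rpower_pos).
    rewrite Rpower_mult. replace (- q * p) with (- q + - (1)) by (unfold q; field; lra).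
    rewrite Rpower_plus, (Rpower_Ropp hh 1), Rpower_1 by auto. field. lra. }
  assert (Hmain : p * Rpower mu (p - 1) * X - (p - 1) * (Rpower mu p * Rpower hh (- q))
                  <= hh * rpow X p).
  { rewrite <- E1, <- E2, <- EY. rewrite <- EY in Ht. nra. }
  fold q. nra.
Qed.

(** Choosing [mu = G / B] in the integrated Young inequality. *)
Lemma young_optimum p G B N : 1 < p -> 0 < G -> 0 < B ->
  (forall mu, 0 < mu -> p * Rpower mu (p - 1) * G - (p - 1) * Rpower mu p * B <= N) ->
  Rpower G p / Rpower B (p - 1) <= N.
Proof.
  intros Hp HG HB Hmu.
  eapply Rle_trans; [|apply (Hmu (G / B)); apply Rdiv_lt_0_compat; auto].
  rewrite !Rpower_div by auto.
  assert (E1 : Rpower G (p - 1) * G = Rpower G p)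
    by (rewrite Rpower_mult_self by auto; f_equal; ring).
  assert (E2 : Rpower B (p - 1) * B = Rpower B p)
    by (rewrite Rpower_mult_self by auto; f_equal; ring).
  pose proof (Rpower_pos B (p - 1)).
  right. rewrite <- E1, <- E2. field. lra.
Qed.

(** * The Regge-Wheeler coordinate and the coefficients [F], [h] *)

Section ReggeWheeler.
Variables (M : R) (r : R -> R).
Hypothesis HM : 0 < M.
Hypothesis Hr : is_RW_inverse M r.

Definition rw_coord x := x + 2 * M * ln (x - 2 * M).

Lemma rw_coord_increasing x y : 2 * M < x -> x < y -> rw_coord x < rw_coord y.
Proof.
  intros Hx Hxy. unfold rw_coord.
  assert (ln (x - 2 * M) < ln (y - 2 * M)) by (apply ln_increasing; lra). nra.
Qed.

Lemma continuity_pt_rw_coord x : 2 * M < x -> continuity_pt rw_coord x.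
Proof.
  intros Hx. unfold rw_coord. apply continuity_pt_plus.
  - apply derivable_continuous_pt, derivable_pt_id.
  - apply continuity_pt_scal, (continuity_pt_comp (fun x => x - 2 * M) ln).
    + apply continuity_pt_minus; [apply derivable_continuous_pt, derivable_pt_id|].
      apply continuity_pt_const; intros ? ?; auto.
    + apply (derivable_pt_lim_continuity_pt _ _ _ (derivable_pt_lim_ln (x - 2 * M) ltac:(lra))).
Qed.

Lemma r_gt s : 2 * M < r s.
Proof. apply (Hr s). Qed.

Lemma r_pos s : 0 < r s.
Proof. pose proof (r_gt s); lra. Qed.

Lemma rw_coord_r s : rw_coord (r s) = s.
Proof. apply (Hr s). Qed.

Lemma r_rw_coord x : 2 * M < x -> r (rw_coord x) = x.
Proof.
  intros Hx. set (y := r (rw_coord x)).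
  assert (Hy : rw_coord y = rw_coord x) by apply rw_coord_r.
  assert (2 * M < y) by apply r_gt.
  destruct (Rtotal_order y x) as [Hl|[He|Hl]]; auto.
  - apply (rw_coord_increasing y x) in Hl; lra.
  - apply (rw_coord_increasing x y) in Hl; lra.
Qed.

Lemma r_le s1 s2 : s1 <= s2 -> r s1 <= r s2.
Proof.
  intros Hs. destruct (Rle_dec (r s1) (r s2)) as [Hl|Hl]; auto.
  pose proof (rw_coord_increasing (r s2) (r s1) (r_gt s2) ltac:(lra)) as Hi.
  rewrite !rw_coord_r in Hi. lra.
Qed.

Lemma continuity_pt_r s : continuity_pt r s.
Proof.
  set (e := (r s - 2 * M) / 2). pose proof (r_gt s).
  assert (He : 0 < e) by (unfold e; lra).
  assert (Hlb : 2 * M < r s - e) by (unfold e; lra).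
  apply (continuity_pt_recip_interv rw_coord r (r s - e) (r s + e)); try lra.
  - intros x y Hx Hxy _. apply rw_coord_increasing; lra.
  - intros x _ _. apply rw_coord_r.
  - intros x Hx1 Hx2. apply r_le in Hx1, Hx2.
    rewrite !r_rw_coord in Hx1, Hx2 by lra. lra.
  - intros a Ha. apply continuity_pt_rw_coord. lra.
  - rewrite <- (rw_coord_r s) at 2 3.
    split; apply rw_coord_increasing; lra.
Qed.

Lemma r_sub_exp s : r s - 2 * M = exp ((s - r s) / (2 * M)).
Proof.
  destruct (Hr s) as [H1 H2].
  assert (E : ln (r s - 2 * M) = (s - r s) / (2 * M)) by (field_simplify_eq; lra).
  rewrite <- E, exp_ln; lra.
Qed.

Lemma F_eq s : Ffun M r s = (r s - 2 * M) / r s.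
Proof. unfold Ffun. pose proof (r_pos s). field; lra. Qed.

Lemma F_pos s : 0 < Ffun M r s.
Proof. rewrite F_eq. pose proof (r_gt s). apply Rdiv_lt_0_compat; lra. Qed.

Lemma F_le_1 s : Ffun M r s <= 1.
Proof.
  unfold Ffun. pose proof (r_pos s).
  assert (0 < 2 * M / r s) by (apply Rdiv_lt_0_compat; lra). lra.
Qed.

Lemma continuity_pt_F s : continuity_pt (Ffun M r) s.
Proof.
  unfold Ffun. apply continuity_pt_minus; [apply continuity_pt_const; intros a b; auto|].
  apply continuity_pt_div; [apply continuity_pt_const; intros a b; auto| |].
  - apply continuity_pt_r.
  - pose proof (r_pos s); lra.
Qed.

Lemma h_pos p s : 0 < hfun M p r s.
Proof. unfold hfun. apply Rmult_lt_0_compat; [apply F_pos|apply Rpower_pos]. Qed.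

Lemma continuity_pt_h p s : continuity_pt (hfun M p r) s.
Proof.
  unfold hfun. apply continuity_pt_mult; [apply continuity_pt_F|].
  apply (continuity_pt_comp r (fun x => Rpower x (1 - p))).
  - apply continuity_pt_r.
  - apply continuity_pt_Rpower, r_pos.
Qed.

End ReggeWheeler.

Lemma exp_le_exp x y : x <= y -> exp x <= exp y.
Proof. intros [h|h]; [apply Rlt_le, exp_increasing; auto|rewrite h; lra]. Qed.

Lemma continuity_pt_exp_affine (a b : R) s : continuity_pt (fun s => exp ((s - a) / b)) s.
Proof.
  apply (continuity_pt_comp (fun s => (s - a) / b) exp).
  - unfold Rdiv. apply continuity_pt_mult.
    + apply continuity_pt_minus; [apply derivable_continuous_pt, derivable_pt_id|].
      apply continuity_pt_const; intros ? ?; auto.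
    + apply continuity_pt_const; intros ? ?; auto.
  - apply derivable_continuous_pt, derivable_pt_exp.
Qed.

Lemma RInt_exp_affine a c L : 0 < c ->
  RInt (fun s => exp ((s - a) / c)) (-L) L = c * (exp ((L - a) / c) - exp ((-L - a) / c)).
Proof.
  intros Hc. apply is_RInt_unique.
  replace (c * (exp ((L - a) / c) - exp ((-L - a) / c))) with
    (minus (c * exp ((L - a) / c)) (c * exp ((-L - a) / c))) by (unfold minus, plus, opp; simpl; ring).
  apply (is_RInt_derive (V := R_CompleteNormedModule) (fun s => c * exp ((s - a) / c))).
  - intros x _. apply is_derive_Reals.
    replace (exp ((x - a) / c)) with (c * (exp ((x - a) / c) * ((1 - 0) * / c))) by (field; lra).
    apply derivable_pt_lim_scal.
    apply (derivable_pt_lim_comp (fun s => (s - a) / c) exp); [|apply derivable_pt_lim_exp].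
    apply derivable_pt_lim_scal_right, derivable_pt_lim_minus;
      [apply derivable_pt_lim_id|apply derivable_pt_lim_const].
  - intros x _. apply continuity_pt_filterlim, continuity_pt_exp_affine.
Qed.

Section Weight.
Variables (M : R) (r : R -> R) (p R0 Cphi : R) (phi : R -> R).
Hypothesis HM : 0 < M.
Hypothesis Hr : is_RW_inverse M r.
Hypothesis Hp : 3/2 <= p.
Hypothesis HR0 : 0 < R0.
Hypothesis HC : 0 < Cphi.
Hypothesis Hphi_pos : forall s, 0 <= phi s.
Hypothesis Hphi_le : forall s, phi s <= Cphi * exp (s / (2 * M)).
Hypothesis Hphi_cont : forall s, continuity_pt phi s.

Lemma h_neg_power_le s :
  Rpower (hfun M p r s) (- / (p - 1)) <= r s * (r s / (r s - 2 * M)) ^ 2.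
Proof.
  pose proof (F_pos M r HM Hr s) as HF. pose proof (F_le_1 M r HM Hr s) as HF1.
  pose proof (r_gt M r Hr s).
  assert (E : Rpower (hfun M p r s) (- / (p - 1)) = r s * / Rpower (Ffun M r s) (/ (p - 1))).
  { unfold hfun. rewrite <- Rpower_mult_distr by (auto; apply Rpower_pos).
    rewrite Rpower_mult. replace ((1 - p) * - / (p - 1)) with 1 by (field; lra).
    rewrite Rpower_1, Rpower_Ropp by lra. ring. }
  rewrite E. apply Rmult_le_compat_l; [lra|].
  replace ((r s / (r s - 2 * M)) ^ 2) with (/ Ffun M r s ^ 2)
    by (rewrite F_eq by auto; field; lra).
  (* [F <= 1] and [1/(p-1) <= 2], hence [F^(1/(p-1)) >= F^2] *)
  apply Rinv_le_contravar; [apply pow_lt; auto|].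
  rewrite <- (Rpower_pow 2 _ HF). replace (INR 2) with 2 by (simpl; ring).
  unfold Rpower. apply exp_le_exp.
  assert (ln (Ffun M r s) <= 0).
  { rewrite <- ln_1. destruct HF1 as [h|h]; [apply Rlt_le, ln_increasing; auto|rewrite h; lra]. }
  assert (/ (p - 1) <= 2).
  { apply Rle_trans with (/ (1/2)); [apply Rinv_le_contravar|]; lra. }
  nra.
Qed.

Lemma r_ratio_far s : 2 * M + 1 <= r s -> r s <= s /\ r s / (r s - 2 * M) <= 1 + 2 * M.
Proof.
  intros Hs. split.
  - destruct (Rle_dec (r s) s) as [Hl|Hl]; auto.
    pose proof (r_sub_exp M r HM Hr s).
    assert (exp ((s - r s) / (2 * M)) < 1).
    { rewrite <- exp_0. apply exp_increasing. apply Rdiv_neg_pos; lra. }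
    lra.
  - apply Rle_div_l; [lra|]. nra.
Qed.

Lemma r_ratio_near s : r s / (r s - 2 * M) = r s * exp ((r s - s) / (2 * M)).
Proof.
  rewrite (r_sub_exp M r HM Hr s) at 1. unfold Rdiv. f_equal.
  rewrite <- exp_Ropp. f_equal. field. lra.
Qed.

Definition weight_const_near := Cphi * (2 * M + 1) ^ 3 * exp ((2 * (2 * M + 1) + R0) / (2 * M)).
Definition weight_const_far := Cphi * (1 + 2 * M) ^ 2.
Definition weight_const :=
  2 * weight_const_near + 2 * M * weight_const_far * exp (R0 / (2 * M)).

Lemma weight_const_near_ge_0 : 0 <= weight_const_near.
Proof.
  unfold weight_const_near. pose proof (exp_pos ((2 * (2 * M + 1) + R0) / (2 * M))).
  apply Rmult_le_pos; [apply Rmult_le_pos; [lra|apply pow_le; lra]|lra].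
Qed.

Lemma weight_const_far_pos : 0 < weight_const_far.
Proof. unfold weight_const_far. apply Rmult_lt_0_compat; [lra|apply pow_lt; lra]. Qed.

Lemma weight_const_pos : 0 < weight_const.
Proof.
  unfold weight_const. pose proof weight_const_near_ge_0. pose proof weight_const_far_pos.
  assert (0 < 2 * M * weight_const_far * exp (R0 / (2 * M)))
    by (repeat apply Rmult_lt_0_compat; try lra; apply exp_pos).
  lra.
Qed.

Lemma psi_ge_0 t s : 0 <= psi M phi t s.
Proof. unfold psi. apply Rmult_le_pos; [apply Rlt_le, exp_pos|apply Hphi_pos]. Qed.

Lemma psi_le t s : psi M phi t s <= Cphi * exp ((s - t) / (2 * M)).
Proof.
  unfold psi. replace ((s - t) / (2 * M)) with (- t / (2 * M) + s / (2 * M)) by (field; lra).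
  rewrite exp_plus. pose proof (exp_pos (- t / (2 * M))). pose proof (Hphi_le s). nra.
Qed.

Lemma weight_pointwise_le t s : 0 <= t -> - (t + R0) <= s <= t + R0 ->
  psi M phi t s * Rpower (hfun M p r s) (- / (p - 1)) <=
  weight_const_near + weight_const_far * (t + R0) * exp ((s - t) / (2 * M)).
Proof.
  intros Ht Hs.
  set (a := r s). set (q := a / (a - 2 * M)). set (E := exp ((s - t) / (2 * M))).
  assert (Ha : 2 * M < a) by apply (r_gt M r Hr).
  assert (Hq : 0 < q) by (apply Rdiv_lt_0_compat; lra).
  assert (HE : 0 < E) by apply exp_pos.
  pose proof weight_const_near_ge_0 as Hnear. pose proof weight_const_far_pos as Hfar.
  apply Rle_trans with (Cphi * E * (a * q ^ 2)).
  { apply Rmult_le_compat; [apply psi_ge_0|apply Rlt_le, Rpower_pos|apply psi_le|].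
    apply h_neg_power_le. }
  destruct (Rle_dec (2 * M + 1) a) as [Hbig|Hsmall].
  - destruct (r_ratio_far s Hbig) as [Has Hqb].
    fold a q in Has, Hqb.
    assert (Hq2 : q ^ 2 <= (1 + 2 * M) ^ 2) by (apply pow_incr; lra).
    assert (a * q ^ 2 <= (t + R0) * (1 + 2 * M) ^ 2)
      by (apply Rmult_le_compat; try lra; apply pow_le; lra).
    unfold weight_const_far.
    assert (0 <= Cphi * E) by nra. nra.
  - (* near the horizon, [q] is exponentially large in [-s], which [psi] compensates *)
    assert (Hqe : q = a * exp ((a - s) / (2 * M))) by apply r_ratio_near.
    replace (Cphi * E * (a * q ^ 2)) with
      (Cphi * a ^ 3 * exp ((s - t) / (2 * M) + ((a - s) / (2 * M) + (a - s) / (2 * M))))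
      by (rewrite Hqe, !exp_plus; unfold E; ring).
    assert (Hx : exp ((s - t) / (2 * M) + ((a - s) / (2 * M) + (a - s) / (2 * M))) <=
                 exp ((2 * (2 * M + 1) + R0) / (2 * M))).
    { apply exp_le_exp. apply Rle_trans with ((2 * a - s - t) / (2 * M)); [right; field; lra|].
      apply Rmult_le_compat_r; [apply Rlt_le, Rinv_0_lt_compat|]; lra. }
    assert (a ^ 3 <= (2 * M + 1) ^ 3) by (apply pow_incr; lra).
    assert (Cphi * a ^ 3 * exp ((s - t) / (2 * M) + ((a - s) / (2 * M) + (a - s) / (2 * M)))
            <= weight_const_near).
    { apply Rmult_le_compat; try (apply Rlt_le, exp_pos); auto.
      - apply Rmult_le_pos; [lra|apply pow_le; lra].
      - apply Rmult_le_compat_l; lra. }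
    assert (0 <= weight_const_far * (t + R0) * E) by (apply Rmult_le_pos; [apply Rmult_le_pos|]; lra).
    lra.
Qed.

Lemma weight_integral_le t : 0 <= t ->
  RInt (fun s => psi M phi t s * Rpower (hfun M p r s) (- / (p - 1))) (- (t + R0)) (t + R0)
  <= weight_const * (t + R0).
Proof.
  intros Ht. set (L := t + R0).
  assert (Hcst : forall c x, continuity_pt (fun _ => c) x)
    by (intros; apply continuity_pt_const; intros ? ?; auto).
  assert (Hexp : forall c x, continuity_pt (fun s => c * exp ((s - t) / (2 * M))) x)
    by (intros; apply continuity_pt_mult; [apply Hcst|apply continuity_pt_exp_affine]).
  eapply Rle_trans.
  - apply (RInt_le _ (fun s => 1 * weight_const_near
                        + weight_const_far * L * exp ((s - t) / (2 * M)))).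
    + unfold L; lra.
    + apply ex_RInt_continuity. intros s. apply continuity_pt_mult.
      * unfold psi. apply continuity_pt_mult; auto.
      * apply (continuity_pt_comp (hfun M p r) (fun x => Rpower x _)).
        -- apply continuity_pt_h; auto.
        -- apply continuity_pt_Rpower, h_pos; auto.
    + apply ex_RInt_continuity. intros s. apply continuity_pt_plus; [apply Hcst|apply Hexp].
    + intros s Hs. rewrite Rmult_1_l. apply weight_pointwise_le; unfold L in Hs; lra.
  - rewrite (RInt_lincomb2 (fun _ => weight_const_near) (fun s => exp ((s - t) / (2 * M))));
      try (apply ex_RInt_continuity; intros; auto using continuity_pt_exp_affine).
    rewrite RInt_const, RInt_exp_affine by lra.
    unfold scal; simpl; unfold mult; simpl.
    assert (E : exp ((L - t) / (2 * M)) = exp (R0 / (2 * M))) by (unfold L; f_equal; field; lra).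
    rewrite E. pose proof (exp_pos ((- L - t) / (2 * M))).
    pose proof weight_const_near_ge_0. pose proof weight_const_far_pos.
    assert (0 <= weight_const_far * L) by (apply Rmult_le_pos; unfold L; lra).
    assert (weight_const_far * L * (2 * M * (exp (R0 / (2 * M)) - exp ((- L - t) / (2 * M))))
            <= weight_const_far * L * (2 * M * exp (R0 / (2 * M))))
      by (apply Rmult_le_compat_l; nra).
    unfold weight_const. lra.
Qed.

End Weight.

(** * The functionals of a solution *)

Section Solution.
Variables (M p R0 : R) (r : R -> R) (f g : R -> R) (phi dphi ddphi : R -> R).
Hypothesis HM : 0 < M.
Hypothesis Hp : 3/2 <= p <= 2.
Hypothesis Hr : is_RW_inverse M r.
Hypothesis HR0 : 0 < R0.
Hypothesis Hf_ge0 : forall s, 0 <= f s.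
Hypothesis Hg_ge0 : forall s, 0 <= g s.
Hypothesis Hfg_supp : forall s, R0 < Rabs s -> f s = 0 /\ g s = 0.
Hypothesis Hdphi : forall s, derivable_pt_lim phi s (dphi s).
Hypothesis Hddphi : forall s, derivable_pt_lim dphi s (ddphi s).
Hypothesis Hddphi_cont : continuity ddphi.
Hypothesis Hphi_pos : forall s, 0 < phi s.
Hypothesis Hphi_eq : forall s, - ddphi s + Wfun M r s * phi s + / (4 * M ^ 2) * phi s = 0.
Variables (eps T : R) (v vt vs vtt vts vss : R -> R -> R).
Hypothesis Heps : 0 < eps.
Hypothesis HT : 0 < T.
Hypothesis Hsol : is_solution M p r R0 eps f g T v vt vs vtt vts vss.

Lemma sol_derivatives t s : in_time T t ->
  derivable_within (in_time T) (fun x => v x s) t (vt t s) /\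
  derivable_pt_lim (fun y => v t y) s (vs t s) /\
  derivable_within (in_time T) (fun x => vt x s) t (vtt t s) /\
  derivable_pt_lim (fun y => vt t y) s (vts t s) /\
  derivable_pt_lim (fun y => vs t y) s (vss t s).
Proof. apply Hsol. Qed.
Lemma sol_cont_v : cont_strip T v. Proof. apply Hsol. Qed.
Lemma sol_cont_vt : cont_strip T vt. Proof. apply Hsol. Qed.
Lemma sol_cont_vtt : cont_strip T vtt. Proof. apply Hsol. Qed.
Lemma sol_cont_vss : cont_strip T vss. Proof. apply Hsol. Qed.
Lemma sol_equation t s : in_time T t ->
  vtt t s - vss t s + Wfun M r s * v t s = hfun M p r s * rpow (Rabs (vt t s)) p.
Proof. apply Hsol. Qed.
Lemma sol_initial s : v 0 s = eps * f s /\ vt 0 s = eps * g s.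
Proof. apply Hsol. Qed.
Lemma sol_support t s : in_time T t -> t + R0 < Rabs s -> v t s = 0.
Proof. apply Hsol. Qed.

Lemma continuity_pt_phi s : continuity_pt phi s.
Proof. apply (derivable_pt_lim_continuity_pt _ _ _ (Hdphi s)). Qed.

Lemma sol_support_vt t s : in_time T t -> t + R0 < Rabs s -> vt t s = 0.
Proof.
  intros Ht Hs. pose proof Ht as Ht'. unfold in_time in Ht'.
  apply (derivable_within_right_zero T (fun x => v x s) t _ (Rabs s - t - R0)); try lra.
  - intros y Hy Hy'. apply sol_support; auto; lra.
  - apply sol_derivatives, Ht.
Qed.

Lemma sol_support_vs t s : in_time T t -> t + R0 < Rabs s -> vs t s = 0.
Proof.
  intros Ht Hs. apply (derivable_pt_lim_locally_zero (v t) s _ (Rabs s - t - R0)); try lra.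
  - intros y Hy. apply sol_support; auto.
    pose proof (Rabs_triang_inv s (s - y)) as Htri. replace (s - (s - y)) with y in Htri by ring.
    rewrite Rabs_minus_sym in Hy. lra.
  - apply sol_derivatives, Ht.
Qed.

(** The integrands of [G = ∫ ψ ∂_t v], [H = ∫ ψ v] and [N = ∫ h |∂_t v|^p ψ]. *)

Definition kappa := / (2 * M).
Definition dens_G tau s := psi M phi tau s * vt tau s.
Definition dens_H tau s := psi M phi tau s * v tau s.
Definition dens_N tau s := hfun M p r s * rpow (Rabs (vt tau s)) p * psi M phi tau s.
Definition dt_dens_G tau s := - kappa * dens_G tau s + psi M phi tau s * vtt tau s.
Definition dt_dens_H tau s := - kappa * dens_H tau s + dens_G tau s.

Lemma continuity_pt_psi t s : continuity_pt (psi M phi t) s.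
Proof.
  unfold psi. apply continuity_pt_mult; [apply continuity_pt_const; intros ? ?; auto|].
  apply continuity_pt_phi.
Qed.

Lemma continuity_2d_pt_psi_clamp t1 u s :
  continuity_2d_pt (fun a b => psi M phi (clamp 0 t1 a) b) u s.
Proof.
  unfold psi. apply continuity_2d_pt_mult; [|apply continuity_2d_pt_snd, continuity_pt_phi].
  apply (continuity_2d_pt_fst (fun a => exp (- clamp 0 t1 a / (2 * M)))).
  apply (continuity_pt_comp (clamp 0 t1) (fun a => exp (- a / (2 * M))));
    [apply continuity_pt_clamp|].
  apply (continuity_pt_comp (fun a => - a / (2 * M)) exp);
    [|apply derivable_continuous_pt, derivable_pt_exp].
  unfold Rdiv. apply continuity_pt_mult; [|apply continuity_pt_const; intros ? ?; auto].
  apply continuity_pt_opp, derivable_continuous_pt, derivable_pt_id.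
Qed.

Section Clamped.
Variable t1 : R.
Hypothesis Ht1 : 0 <= t1 < T.

Lemma continuity_2d_pt_dens_G u s :
  continuity_2d_pt (fun a b => dens_G (clamp 0 t1 a) b) u s.
Proof.
  apply continuity_2d_pt_mult;
    [apply continuity_2d_pt_psi_clamp|apply (cont_strip_clamp T vt t1 sol_cont_vt Ht1)].
Qed.

Lemma continuity_2d_pt_dens_H u s :
  continuity_2d_pt (fun a b => dens_H (clamp 0 t1 a) b) u s.
Proof.
  apply continuity_2d_pt_mult;
    [apply continuity_2d_pt_psi_clamp|apply (cont_strip_clamp T v t1 sol_cont_v Ht1)].
Qed.

Lemma continuity_2d_pt_dens_N u s :
  continuity_2d_pt (fun a b => dens_N (clamp 0 t1 a) b) u s.
Proof.
  apply continuity_2d_pt_mult; [apply continuity_2d_pt_mult|apply continuity_2d_pt_psi_clamp].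
  - apply continuity_2d_pt_snd, (continuity_pt_h M r HM Hr).
  - apply (continuity_2d_pt_comp (fun y => rpow (Rabs y) p) (fun a b => vt (clamp 0 t1 a) b)).
    + apply continuity_pt_rpow_abs; lra.
    + apply (cont_strip_clamp T vt t1 sol_cont_vt Ht1).
Qed.

Lemma continuity_2d_pt_dt_dens_G u s :
  continuity_2d_pt (fun a b => dt_dens_G (clamp 0 t1 a) b) u s.
Proof.
  apply continuity_2d_pt_plus; apply continuity_2d_pt_mult.
  - apply continuity_2d_pt_const.
  - apply continuity_2d_pt_dens_G.
  - apply continuity_2d_pt_psi_clamp.
  - apply (cont_strip_clamp T vtt t1 sol_cont_vtt Ht1).
Qed.

Lemma continuity_2d_pt_dt_dens_H u s :
  continuity_2d_pt (fun a b => dt_dens_H (clamp 0 t1 a) b) u s.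
Proof.
  apply continuity_2d_pt_plus; [apply continuity_2d_pt_mult|apply continuity_2d_pt_dens_G].
  - apply continuity_2d_pt_const.
  - apply continuity_2d_pt_dens_H.
Qed.

End Clamped.

Lemma continuity_pt_dens_G x s : in_time T x -> continuity_pt (dens_G x) s.
Proof.
  intros H. apply continuity_pt_mult;
    [apply continuity_pt_psi|apply (cont_strip_section T vt x s sol_cont_vt H)].
Qed.

Lemma continuity_pt_dens_H x s : in_time T x -> continuity_pt (dens_H x) s.
Proof.
  intros H. apply continuity_pt_mult;
    [apply continuity_pt_psi|apply (cont_strip_section T v x s sol_cont_v H)].
Qed.

Lemma continuity_pt_dens_N x s : in_time T x -> continuity_pt (dens_N x) s.
Proof.
  intros H. apply continuity_pt_mult; [apply continuity_pt_mult|apply continuity_pt_psi].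
  - apply (continuity_pt_h M r HM Hr).
  - apply (continuity_pt_comp (vt x) (fun y => rpow (Rabs y) p)).
    + apply (cont_strip_section T vt x s sol_cont_vt H).
    + apply continuity_pt_rpow_abs; lra.
Qed.

Lemma dens_G_support x s : in_time T x -> x + R0 < Rabs s -> dens_G x s = 0.
Proof. intros; unfold dens_G; rewrite sol_support_vt; auto; ring. Qed.

Lemma dens_N_support x s : in_time T x -> x + R0 < Rabs s -> dens_N x s = 0.
Proof.
  intros; unfold dens_N; rewrite sol_support_vt, Rabs_R0, rpow_nonpos; auto; try lra; ring.
Qed.

Lemma dens_N_ge_0 x s : 0 <= dens_N x s.
Proof.
  unfold dens_N, psi. apply Rmult_le_pos; apply Rmult_le_pos.
  - apply Rlt_le, (h_pos M r HM Hr).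
  - apply rpow_ge_0.
  - apply Rlt_le, exp_pos.
  - apply Rlt_le, Hphi_pos.
Qed.

Lemma is_derive_psi tau s : is_derive (fun u => psi M phi u s) tau (- kappa * psi M phi tau s).
Proof.
  apply is_derive_Reals. unfold psi, kappa.
  replace (- / (2 * M) * (exp (- tau / (2 * M)) * phi s)) with
    ((exp (- tau / (2 * M)) * (- 1 * / (2 * M))) * phi s) by ring.
  apply derivable_pt_lim_scal_right.
  apply (derivable_pt_lim_comp (fun u => - u / (2 * M)) exp); [|apply derivable_pt_lim_exp].
  unfold Rdiv. apply derivable_pt_lim_scal_right, derivable_pt_lim_opp, derivable_pt_lim_id.
Qed.

Lemma is_derive_psi_mult (w dw : R -> R -> R) y s :
  derivable_within (in_time T) (fun x => w x s) y (dw y s) -> 0 < y < T ->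
  is_derive (fun u => psi M phi u s * w u s) y
    (- kappa * (psi M phi y s * w y s) + psi M phi y s * dw y s).
Proof.
  intros Hw Hy. apply derivable_within_interior in Hw; auto.
  apply is_derive_Reals.
  replace (- kappa * (psi M phi y s * w y s) + psi M phi y s * dw y s) with
    ((- kappa * psi M phi y s) * w y s + psi M phi y s * dw y s) by ring.
  apply (derivable_pt_lim_mult (fun u => psi M phi u s) (fun u => w u s)); auto.
  apply is_derive_Reals, is_derive_psi.
Qed.

Lemma is_derive_dens_G y s : 0 < y < T -> is_derive (fun u => dens_G u s) y (dt_dens_G y s).
Proof.
  intros Hy. apply (is_derive_psi_mult vt vtt); auto.
  apply sol_derivatives. unfold in_time; lra.
Qed.

Lemma is_derive_dens_H y s : 0 < y < T -> is_derive (fun u => dens_H u s) y (dt_dens_H y s).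
Proof.
  intros Hy. apply (is_derive_psi_mult v vt); auto.
  apply sol_derivatives. unfold in_time; lra.
Qed.

(** The part of [ψ ∂_t^2 v] that integrates to zero: by [φ'' = (W + κ^2) φ] it is
    [ψ ∂_s^2 v - ∂_s^2 ψ v = ∂_s (ψ ∂_s v - ∂_s ψ v)]. *)
Definition ibp_dens x s := psi M phi x s * vss x s - exp (- x / (2 * M)) * ddphi s * v x s.

Lemma continuity_pt_ibp_dens x s : in_time T x -> continuity_pt (ibp_dens x) s.
Proof.
  intros H. apply continuity_pt_minus; apply continuity_pt_mult.
  - apply continuity_pt_psi.
  - apply (cont_strip_section T vss x s sol_cont_vss H).
  - apply continuity_pt_mult; [apply continuity_pt_const; intros ? ?; auto|apply Hddphi_cont].
  - apply (cont_strip_section T v x s sol_cont_v H).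
Qed.

Lemma RInt_ibp_dens x A : in_time T x -> x + R0 < A -> RInt (ibp_dens x) (-A) A = 0.
Proof.
  intros Hx HA. apply is_RInt_unique.
  set (e := exp (- x / (2 * M))).
  set (flux := fun s => e * (phi s * vs x s - dphi s * v x s)).
  assert (H0 : minus (flux A) (flux (-A)) = 0).
  { assert (Ha1 : x + R0 < Rabs A) by (unfold in_time in Hx; rewrite Rabs_right; lra).
    assert (Ha2 : x + R0 < Rabs (-A)) by (rewrite Rabs_Ropp; auto).
    unfold flux. rewrite !sol_support_vs, !sol_support by auto.
    unfold minus, plus, opp; simpl; ring. }
  rewrite <- H0. apply (is_RInt_derive (V := R_CompleteNormedModule)).
  - intros s _. apply is_derive_Reals.
    destruct (sol_derivatives x s Hx) as [_ [Hvs [_ [_ Hvss]]]].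
    unfold flux, ibp_dens, psi. fold e.
    replace (e * phi s * vss x s - e * ddphi s * v x s) with
      (e * ((dphi s * vs x s + phi s * vss x s) - (ddphi s * v x s + dphi s * vs x s))) by ring.
    apply derivable_pt_lim_scal, derivable_pt_lim_minus.
    + apply (derivable_pt_lim_mult phi (fun y => vs x y)); auto.
    + apply (derivable_pt_lim_mult dphi (fun y => v x y)); auto.
  - intros s _. apply continuity_pt_filterlim, continuity_pt_ibp_dens; auto.
Qed.

Lemma dt_dens_G_split x s : in_time T x ->
  dt_dens_G x s = - kappa * dens_G x s + ibp_dens x s + kappa * kappa * dens_H x s + dens_N x s.
Proof.
  intros Hx.
  assert (Hk : kappa * kappa = / (4 * M ^ 2)) by (unfold kappa; field; lra).
  assert (Hd : ddphi s = Wfun M r s * phi s + / (4 * M ^ 2) * phi s)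
    by (pose proof (Hphi_eq s); lra).
  assert (Hv : vtt x s = vss x s - Wfun M r s * v x s + hfun M p r s * rpow (Rabs (vt x s)) p)
    by (pose proof (sol_equation x s Hx); lra).
  rewrite Hk. unfold dt_dens_G, ibp_dens, dens_G, dens_H, dens_N, psi. rewrite Hv, Hd. ring.
Qed.

Lemma RInt_dt_dens_G x A : in_time T x -> x + R0 < A ->
  RInt (dt_dens_G x) (-A) A =
  - kappa * RInt (dens_G x) (-A) A + kappa * kappa * RInt (dens_H x) (-A) A
  + RInt (dens_N x) (-A) A :> R.
Proof.
  intros Hx HA.
  rewrite (RInt_ext _ (fun s => - kappa * dens_G x s + 1 * ibp_dens x s
                                + (kappa * kappa * dens_H x s + 1 * dens_N x s)))
    by (intros; rewrite dt_dens_G_split, !Rmult_1_l, Rplus_assoc by auto; reflexivity).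
  rewrite RInt_lincomb4, RInt_ibp_dens by (auto; apply ex_RInt_continuity; intros;
    auto using continuity_pt_dens_G, continuity_pt_ibp_dens, continuity_pt_dens_H,
               continuity_pt_dens_N).
  ring.
Qed.

Lemma RInt_dt_dens_H x A : in_time T x ->
  RInt (dt_dens_H x) (-A) A = - kappa * RInt (dens_H x) (-A) A + RInt (dens_G x) (-A) A :> R.
Proof.
  intros Hx.
  rewrite (RInt_ext _ (fun s => - kappa * dens_H x s + 1 * dens_G x s))
    by (intros; unfold dt_dens_H; rewrite Rmult_1_l; reflexivity).
  rewrite RInt_lincomb2 by (apply ex_RInt_continuity; intros;
    auto using continuity_pt_dens_G, continuity_pt_dens_H).
  ring.
Qed.

(** Up to time [t1] the integrands vanish near the endpoints of [[-radius t1, radius t1]],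
    as integration by parts requires. *)
Definition radius t1 := t1 + R0 + 1.
Definition Gint t1 tau := RInt (dens_G tau) (- radius t1) (radius t1).
Definition Hint t1 tau := RInt (dens_H tau) (- radius t1) (radius t1).
Definition Nint t1 tau := RInt (dens_N tau) (- radius t1) (radius t1).

Lemma is_derive_Gint t1 x : 0 <= t1 < T -> 0 < x < t1 ->
  is_derive (Gint t1) x (- kappa * Gint t1 x + kappa * kappa * Hint t1 x + Nint t1 x).
Proof.
  intros Ht1 Hx. unfold Gint, Hint, Nint.
  rewrite <- RInt_dt_dens_G by (unfold in_time, radius; lra).
  apply (is_derive_RInt_strip T dens_G dt_dens_G t1); try lra.
  - intros; apply is_derive_dens_G; auto.
  - intros; apply continuity_2d_pt_dt_dens_G; auto.
  - intros; apply continuity_pt_dens_G; unfold in_time; lra.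
Qed.

Lemma is_derive_Hint t1 x : 0 <= t1 < T -> 0 < x < t1 ->
  is_derive (Hint t1) x (- kappa * Hint t1 x + Gint t1 x).
Proof.
  intros Ht1 Hx. unfold Gint, Hint.
  rewrite <- RInt_dt_dens_H by (unfold in_time; lra).
  apply (is_derive_RInt_strip T dens_H dt_dens_H t1); try lra.
  - intros; apply is_derive_dens_H; auto.
  - intros; apply continuity_2d_pt_dt_dens_H; auto.
  - intros; apply continuity_pt_dens_H; unfold in_time; lra.
Qed.

Section FixedHorizon.
Variable t1 : R.
Hypothesis Ht1 : 0 <= t1 < T.

Lemma radius_pos : 0 < radius t1.
Proof. unfold radius; lra. Qed.

Lemma in_time_clamp u : in_time T (clamp 0 t1 u).
Proof. pose proof (clamp_in 0 t1 u). unfold in_time; lra. Qed.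

Lemma continuity_pt_Gint_clamp u : continuity_pt (fun u => Gint t1 (clamp 0 t1 u)) u.
Proof.
  apply (continuity_pt_RInt_param (fun a b => dens_G (clamp 0 t1 a) b)).
  - intros; apply continuity_2d_pt_dens_G; auto.
  - pose proof radius_pos; lra.
Qed.

Lemma continuity_pt_Hint_clamp u : continuity_pt (fun u => Hint t1 (clamp 0 t1 u)) u.
Proof.
  apply (continuity_pt_RInt_param (fun a b => dens_H (clamp 0 t1 a) b)).
  - intros; apply continuity_2d_pt_dens_H; auto.
  - pose proof radius_pos; lra.
Qed.

Definition N_ext u := Nint t1 (clamp 0 t1 u).
Definition I_N u := RInt N_ext 0 u.

Lemma continuity_pt_N_ext u : continuity_pt N_ext u.
Proof.
  apply (continuity_pt_RInt_param (fun a b => dens_N (clamp 0 t1 a) b)).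
  - intros; apply continuity_2d_pt_dens_N; auto.
  - pose proof radius_pos; lra.
Qed.

Lemma N_ext_ge_0 u : 0 <= N_ext u.
Proof.
  apply RInt_ge_0; [pose proof radius_pos; lra| |intros; apply dens_N_ge_0].
  apply ex_RInt_continuity. intros; apply continuity_pt_dens_N, in_time_clamp.
Qed.

Lemma is_derive_I_N x : is_derive I_N x (N_ext x).
Proof.
  apply (is_derive_RInt (V := R_CompleteNormedModule) N_ext I_N 0 x).
  - exists (mkposreal 1 Rlt_0_1). intros y _. apply (RInt_correct (V := R_CompleteNormedModule)).
    apply ex_RInt_continuity, continuity_pt_N_ext.
  - apply continuity_pt_filterlim, continuity_pt_N_ext.
Qed.

Lemma continuity_pt_I_N x : continuity_pt I_N x.
Proof. apply (derivable_pt_lim_continuity_pt _ _ (N_ext x)), is_derive_Reals, is_derive_I_N. Qed.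

Lemma I_N_0 : I_N 0 = 0.
Proof. unfold I_N. rewrite RInt_point. reflexivity. Qed.

Lemma I_N_ge_0 t : 0 <= t -> 0 <= I_N t.
Proof.
  intros Ht. apply RInt_ge_0; auto.
  - apply ex_RInt_continuity, continuity_pt_N_ext.
  - intros; apply N_ext_ge_0.
Qed.

(** [(G + κ H)' = N]. *)
Lemma G_plus_kappa_H_eq t : 0 <= t < t1 ->
  Gint t1 t + kappa * Hint t1 t - I_N t = Gint t1 0 + kappa * Hint t1 0.
Proof.
  intros Ht.
  set (P := fun u => Gint t1 (clamp 0 t1 u) + kappa * Hint t1 (clamp 0 t1 u) - I_N u).
  destruct (MVT_gen P 0 t (fun _ => 0)) as [c [_ Hc]].
  - intros x Hx. cbv zeta in Hx. rewrite Rmin_left, Rmax_right in Hx by lra.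
    apply (is_derive_ext_loc (fun u => Gint t1 u + kappa * Hint t1 u - I_N u)).
    + apply (locally_interval _ x 0 t1); simpl; try lra. intros y Hy1 Hy2. unfold P.
      rewrite !clamp_id by lra. reflexivity.
    + apply is_derive_Reals.
      replace 0 with ((- kappa * Gint t1 x + kappa * kappa * Hint t1 x + Nint t1 x)
                      + kappa * (- kappa * Hint t1 x + Gint t1 x) - N_ext x)
        by (unfold N_ext; rewrite clamp_id by lra; ring).
      apply (derivable_pt_lim_minus (fun u => Gint t1 u + kappa * Hint t1 u) I_N);
        [apply derivable_pt_lim_plus|apply is_derive_Reals, is_derive_I_N].
      * apply is_derive_Reals, is_derive_Gint; auto; lra.
      * apply derivable_pt_lim_scal, is_derive_Reals, is_derive_Hint; auto; lra.
  - intros x Hx. unfold P. apply continuity_pt_minus; [|apply continuity_pt_I_N].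
    apply continuity_pt_plus; [apply continuity_pt_Gint_clamp|].
    apply continuity_pt_scal, continuity_pt_Hint_clamp.
  - unfold P in Hc. rewrite (clamp_id 0 t1 t), (clamp_id 0 t1 0) in Hc by lra.
    rewrite I_N_0 in Hc. lra.
Qed.

(** [(e^{2κt} (G - κ H))' = e^{2κt} N >= 0]. *)
Lemma G_minus_kappa_H_ge t : 0 <= t < t1 ->
  Gint t1 0 - kappa * Hint t1 0 <= exp (2 * kappa * t) * (Gint t1 t - kappa * Hint t1 t).
Proof.
  intros Ht.
  set (Q := fun u => exp (2 * kappa * u) *
                     (Gint t1 (clamp 0 t1 u) - kappa * Hint t1 (clamp 0 t1 u))).
  destruct (MVT_gen Q 0 t (fun u => exp (2 * kappa * u) * N_ext u)) as [c [_ Hc]].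
  - intros x Hx. cbv zeta in Hx. rewrite Rmin_left, Rmax_right in Hx by lra.
    apply (is_derive_ext_loc (fun u => exp (2 * kappa * u) * (Gint t1 u - kappa * Hint t1 u))).
    + apply (locally_interval _ x 0 t1); simpl; try lra. intros y Hy1 Hy2. unfold Q.
      rewrite !clamp_id by lra. reflexivity.
    + apply is_derive_Reals.
      replace (exp (2 * kappa * x) * N_ext x) with
        ((exp (2 * kappa * x) * (2 * kappa * 1)) * (Gint t1 x - kappa * Hint t1 x) +
         exp (2 * kappa * x) * ((- kappa * Gint t1 x + kappa * kappa * Hint t1 x + Nint t1 x)
                                - kappa * (- kappa * Hint t1 x + Gint t1 x)))
        by (unfold N_ext; rewrite clamp_id by lra; ring).
      apply (derivable_pt_lim_mult (fun u => exp (2 * kappa * u))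
                                   (fun u => Gint t1 u - kappa * Hint t1 u)).
      * apply (derivable_pt_lim_comp (fun u => 2 * kappa * u) exp); [|apply derivable_pt_lim_exp].
        apply derivable_pt_lim_scal, derivable_pt_lim_id.
      * apply (derivable_pt_lim_minus (Gint t1) (fun u => kappa * Hint t1 u)).
        -- apply is_derive_Reals, is_derive_Gint; auto; lra.
        -- apply derivable_pt_lim_scal, is_derive_Reals, is_derive_Hint; auto; lra.
  - intros x Hx. unfold Q. apply continuity_pt_mult.
    + apply (continuity_pt_comp (fun u => 2 * kappa * u) exp);
        [|apply derivable_continuous_pt, derivable_pt_exp].
      apply continuity_pt_scal, derivable_continuous_pt, derivable_pt_id.
    + apply continuity_pt_minus; [apply continuity_pt_Gint_clamp|].
      apply continuity_pt_scal, continuity_pt_Hint_clamp.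
  - unfold Q in Hc. rewrite (clamp_id 0 t1 t), (clamp_id 0 t1 0) in Hc by lra.
    rewrite Rmult_0_r, exp_0, Rmult_1_l in Hc.
    pose proof (N_ext_ge_0 c). pose proof (exp_pos (2 * kappa * c)).
    assert (0 <= exp (2 * kappa * c) * N_ext c * (t - 0))
      by (apply Rmult_le_pos; [apply Rmult_le_pos|]; lra).
    lra.
Qed.

Lemma continuity_pt_phi_g s : continuity_pt (fun s => phi s * g s) s.
Proof.
  apply (continuity_pt_ext_eq (fun s => / eps * (phi s * vt 0 s))).
  - intros y. rewrite (proj2 (sol_initial y)). field. lra.
  - apply continuity_pt_mult; [apply continuity_pt_const; intros ? ?; auto|].
    apply continuity_pt_mult; [apply continuity_pt_phi|].
    apply (cont_strip_section T vt 0 s sol_cont_vt). unfold in_time; lra.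
Qed.

Lemma continuity_pt_phi_f s : continuity_pt (fun s => phi s * f s) s.
Proof.
  apply (continuity_pt_ext_eq (fun s => / eps * (phi s * v 0 s))).
  - intros y. rewrite (proj1 (sol_initial y)). field. lra.
  - apply continuity_pt_mult; [apply continuity_pt_const; intros ? ?; auto|].
    apply continuity_pt_mult; [apply continuity_pt_phi|].
    apply (cont_strip_section T v 0 s sol_cont_v). unfold in_time; lra.
Qed.

Definition Phi_g := RInt (fun s => phi s * g s) (- radius t1) (radius t1).
Definition Phi_f := RInt (fun s => phi s * f s) (- radius t1) (radius t1).

Lemma Phi_g_ge_0 : 0 <= Phi_g.
Proof.
  apply RInt_ge_0; [pose proof radius_pos; lra|apply ex_RInt_continuity, continuity_pt_phi_g|].
  intros x _. apply Rmult_le_pos; auto. apply Rlt_le, Hphi_pos.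
Qed.

Lemma Phi_f_ge_0 : 0 <= Phi_f.
Proof.
  apply RInt_ge_0; [pose proof radius_pos; lra|apply ex_RInt_continuity, continuity_pt_phi_f|].
  intros x _. apply Rmult_le_pos; auto. apply Rlt_le, Hphi_pos.
Qed.

Lemma RintR_phi_g : RintR (fun s => phi s * g s) = Phi_g.
Proof.
  assert (Hz : forall x, R0 < Rabs x -> phi x * g x = 0)
    by (intros x Hx; rewrite (proj2 (Hfg_supp x Hx)); ring).
  rewrite (RintR_support _ R0); [|apply continuity_pt_phi_g|auto|lra].
  symmetry. apply RInt_support; [apply continuity_pt_phi_g|auto|unfold radius; lra].
Qed.

Lemma psi_0 s : psi M phi 0 s = phi s.
Proof. unfold psi. replace (- 0 / (2 * M)) with 0 by (field; lra). rewrite exp_0. ring. Qed.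

Lemma Gint_0 : Gint t1 0 = eps * Phi_g.
Proof.
  unfold Gint, Phi_g. rewrite (RInt_ext _ (fun s => scal eps (phi s * g s))).
  - apply (RInt_scal (V := R_CompleteNormedModule)), ex_RInt_continuity, continuity_pt_phi_g.
  - intros x _. unfold dens_G. rewrite psi_0, (proj2 (sol_initial x)).
    unfold scal; simpl; unfold mult; simpl. ring.
Qed.

Lemma Hint_0 : Hint t1 0 = eps * Phi_f.
Proof.
  unfold Hint, Phi_f. rewrite (RInt_ext _ (fun s => scal eps (phi s * f s))).
  - apply (RInt_scal (V := R_CompleteNormedModule)), ex_RInt_continuity, continuity_pt_phi_f.
  - intros x _. unfold dens_H. rewrite psi_0, (proj1 (sol_initial x)).
    unfold scal; simpl; unfold mult; simpl. ring.
Qed.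

Lemma RintR_dens_N tau : 0 <= tau <= t1 -> RintR (dens_N tau) = Nint t1 tau.
Proof.
  intros Htau. assert (Ht : in_time T tau) by (unfold in_time; lra).
  rewrite (RintR_support _ (tau + R0)); try lra;
    intros; auto using continuity_pt_dens_N, dens_N_support.
  symmetry. apply RInt_support; intros; auto using continuity_pt_dens_N, dens_N_support.
  unfold radius; lra.
Qed.

Lemma RintR_dens_G tau : 0 <= tau <= t1 -> RintR (dens_G tau) = Gint t1 tau.
Proof.
  intros Htau. assert (Ht : in_time T tau) by (unfold in_time; lra).
  rewrite (RintR_support _ (tau + R0)); try lra;
    intros; auto using continuity_pt_dens_G, dens_G_support.
  symmetry. apply RInt_support; intros; auto using continuity_pt_dens_G, dens_G_support.
  unfold radius; lra.
Qed.

Lemma Fcal_eq t : 0 <= t <= t1 -> Fcal M p r phi g eps vt t = / 2 * I_N t + eps / 2 * Phi_g.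
Proof.
  intros Ht. unfold Fcal. rewrite RintR_phi_g.
  change (fun tau => RintR (fun s => hfun M p r s * rpow (Rabs (vt tau s)) p * psi M phi tau s))
    with (fun tau => RintR (dens_N tau)).
  rewrite Rint_RInt.
  - do 2 f_equal. symmetry. apply RInt_ext. intros x Hx.
    rewrite Rmin_left, Rmax_right in Hx by lra.
    unfold N_ext. rewrite clamp_id, RintR_dens_N; lra.
  - apply (ex_RInt_ext N_ext); [|apply ex_RInt_continuity, continuity_pt_N_ext].
    intros x Hx. rewrite Rmin_left, Rmax_right in Hx by lra.
    unfold N_ext. rewrite clamp_id, RintR_dens_N; lra.
Qed.

Lemma Fcal_bounds t : 0 <= t < t1 ->
  0 <= Fcal M p r phi g eps vt t /\ Fcal M p r phi g eps vt t <= Gint t1 t.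
Proof.
  intros Ht. rewrite Fcal_eq by lra.
  pose proof (G_plus_kappa_H_eq t Ht) as HP. pose proof (G_minus_kappa_H_ge t Ht) as HQ.
  rewrite Gint_0, Hint_0 in HP, HQ.
  pose proof Phi_g_ge_0. pose proof Phi_f_ge_0. pose proof (I_N_ge_0 t (proj1 Ht)).
  assert (Hk : 0 < kappa) by (unfold kappa; apply Rinv_0_lt_compat; lra).
  set (E := exp (2 * kappa * t)) in *.
  assert (HE : 1 <= E).
  { unfold E. rewrite <- exp_0. apply exp_le_exp. apply Rmult_le_pos; lra. }
  assert (0 <= eps * Phi_g) by (apply Rmult_le_pos; lra).
  assert (0 <= eps * Phi_f) by (apply Rmult_le_pos; lra).
  split; [lra|].
  (* add the two identities: the [Hint] terms cancel up to [kappa eps Phi_f (1 - 1/E) >= 0] *)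
  set (X := Gint t1 t - kappa * Hint t1 t) in *.
  assert (HX : 0 <= E * (kappa * (eps * Phi_f) + X)).
  { assert (0 <= kappa * (eps * Phi_f) * (E - 1)) by (apply Rmult_le_pos; nra). nra. }
  assert (0 <= kappa * (eps * Phi_f) + X).
  { destruct (Rle_dec 0 (kappa * (eps * Phi_f) + X)); auto. nra. }
  unfold X in *. lra.
Qed.

Lemma Fcal_derivable t : 0 <= t < t1 ->
  derivable_within (in_time T) (Fcal M p r phi g eps vt) t (/ 2 * N_ext t).
Proof.
  intros Ht e He.
  destruct (proj1 (is_derive_Reals _ _ _) (is_derive_I_N t) (2 * e) ltac:(lra)) as [d Hd].
  exists (Rmin d (t1 - t)). split; [apply Rmin_pos; [apply cond_pos|lra]|].
  intros y Hy Hyt Hyd. pose proof (Rmin_l d (t1 - t)). pose proof (Rmin_r d (t1 - t)).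
  unfold in_time in Hy. apply Rabs_def2 in Hyd as Hyd'.
  rewrite !Fcal_eq by lra.
  assert (Hq := Hd (y - t) ltac:(lra) ltac:(lra)).
  replace (t + (y - t)) with y in Hq by ring.
  replace ((/ 2 * I_N y + eps / 2 * Phi_g - (/ 2 * I_N t + eps / 2 * Phi_g)) / (y - t)
           - / 2 * N_ext t)
    with (/ 2 * ((I_N y - I_N t) / (y - t) - N_ext t)) by (field; lra).
  rewrite Rabs_mult, Rabs_right by lra. lra.
Qed.

Definition G_abs t := RInt (fun s => psi M phi t s * Rabs (vt t s)) (- (t + R0)) (t + R0).
Definition B_weight t :=
  RInt (fun s => psi M phi t s * Rpower (hfun M p r s) (- / (p - 1))) (- (t + R0)) (t + R0).

Lemma continuity_pt_psi_abs_vt t s : in_time T t ->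
  continuity_pt (fun s => psi M phi t s * Rabs (vt t s)) s.
Proof.
  intros H. apply continuity_pt_mult; [apply continuity_pt_psi|].
  apply (continuity_pt_comp (vt t) Rabs);
    [apply (cont_strip_section T vt t s sol_cont_vt H)|apply Rcontinuity_abs].
Qed.

Lemma continuity_pt_psi_h t s :
  continuity_pt (fun s => psi M phi t s * Rpower (hfun M p r s) (- / (p - 1))) s.
Proof.
  apply continuity_pt_mult; [apply continuity_pt_psi|].
  apply (continuity_pt_comp (hfun M p r) (fun x => Rpower x _));
    [apply (continuity_pt_h M r HM Hr)|apply continuity_pt_Rpower, (h_pos M r HM Hr)].
Qed.

Lemma N_ext_eq t : 0 <= t < t1 -> N_ext t = RInt (dens_N t) (- (t + R0)) (t + R0).
Proof.
  intros Ht. assert (Hti : in_time T t) by (unfold in_time; lra).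
  unfold N_ext. rewrite clamp_id by lra. unfold Nint.
  apply RInt_support; intros; auto using continuity_pt_dens_N, dens_N_support.
  unfold radius; lra.
Qed.

Lemma Gint_le_G_abs t : 0 <= t < t1 -> Gint t1 t <= G_abs t.
Proof.
  intros Ht. assert (Hti : in_time T t) by (unfold in_time; lra).
  unfold Gint. rewrite (RInt_support _ (t + R0)); intros; auto using continuity_pt_dens_G, dens_G_support.
  2: unfold radius; lra.
  apply RInt_le; [lra|apply ex_RInt_continuity; intros; apply continuity_pt_dens_G; auto|
                  apply ex_RInt_continuity; intros; apply continuity_pt_psi_abs_vt; auto|].
  intros s _. apply Rmult_le_compat_l; [|apply Rle_abs].
  unfold psi. apply Rmult_le_pos; [apply Rlt_le, exp_pos|apply Rlt_le, Hphi_pos].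
Qed.

Lemma N_ext_young t mu : 0 <= t < t1 -> 0 < mu ->
  p * Rpower mu (p - 1) * G_abs t - (p - 1) * Rpower mu p * B_weight t <= N_ext t.
Proof.
  intros Ht Hmu. assert (Hti : in_time T t) by (unfold in_time; lra).
  rewrite N_ext_eq by auto. unfold G_abs, B_weight.
  replace (p * Rpower mu (p - 1) * _ - (p - 1) * Rpower mu p * _) with
    (p * Rpower mu (p - 1) * RInt (fun s => psi M phi t s * Rabs (vt t s)) (- (t + R0)) (t + R0)
     + - ((p - 1) * Rpower mu p) *
       RInt (fun s => psi M phi t s * Rpower (hfun M p r s) (- / (p - 1))) (- (t + R0)) (t + R0))
    by ring.
  rewrite <- RInt_lincomb2 by (apply ex_RInt_continuity; intros;
    auto using continuity_pt_psi_abs_vt, continuity_pt_psi_h).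
  apply RInt_le; [lra| | |].
  - apply ex_RInt_continuity. intros. apply continuity_pt_plus; apply continuity_pt_mult;
      auto using continuity_pt_psi_abs_vt, continuity_pt_psi_h;
      apply continuity_pt_const; intros ? ?; auto.
  - apply ex_RInt_continuity. intros; apply continuity_pt_dens_N; auto.
  - intros s _. unfold dens_N.
    pose proof (young_weighted p (Rabs (vt t s)) (hfun M p r s) (psi M phi t s) mu
                  ltac:(lra) (Rabs_pos _) (h_pos M r HM Hr p s)
                  ltac:(unfold psi; apply Rmult_le_pos; [apply Rlt_le, exp_pos|apply Rlt_le, Hphi_pos])
                  Hmu).
    lra.
Qed.

Lemma Fcal_derivative_lower Cphi t : 0 < Cphi ->
  (forall s, phi s <= Cphi * exp (s / (2 * M))) -> 0 <= t < t1 ->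
  / (2 * Rpower (weight_const M R0 Cphi) (p - 1)) * rpow (Fcal M p r phi g eps vt t) p
    / Rpower (t + R0) (p - 1)
  <= / 2 * N_ext t.
Proof.
  intros HC Hphi_le Ht.
  set (F := Fcal M p r phi g eps vt t). set (K := weight_const M R0 Cphi). set (L := t + R0).
  destruct (Fcal_bounds t Ht) as [HF0 HFG]. fold F in HF0, HFG.
  pose proof (N_ext_ge_0 t).
  destruct (Req_dec F 0) as [E|E].
  { rewrite E, rpow_nonpos by lra. unfold Rdiv. rewrite Rmult_0_r, Rmult_0_l. lra. }
  assert (HK : 0 < K) by apply (weight_const_pos M R0 Cphi HM HC).
  assert (HL : 0 < L) by (unfold L; lra).
  assert (HG : F <= G_abs t) by (eapply Rle_trans; [exact HFG|apply Gint_le_G_abs; auto]).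
  assert (HB : B_weight t <= K * L).
  { apply (weight_integral_le M r p R0 Cphi phi); auto; try lra.
    - intros; apply Rlt_le, Hphi_pos.
    - apply continuity_pt_phi. }
  assert (HN : Rpower (G_abs t) p / Rpower (K * L) (p - 1) <= N_ext t).
  { apply young_optimum; try lra; [apply Rmult_lt_0_compat; auto|].
    intros mu Hmu. eapply Rle_trans; [|apply (N_ext_young t mu Ht Hmu)].
    assert (0 <= (p - 1) * Rpower mu p) by (apply Rmult_le_pos; [lra|apply Rlt_le, Rpower_pos]).
    apply Rplus_le_compat_l, Ropp_le_contravar, Rmult_le_compat_l; auto. }
  rewrite rpow_Rpower by lra. rewrite <- Rpower_mult_distr in HN by auto.
  assert (Rpower F p <= Rpower (G_abs t) p) by (apply Rle_Rpower_l; lra).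
  pose proof (Rpower_pos K (p - 1)). pose proof (Rpower_pos L (p - 1)).
  replace (/ (2 * Rpower K (p - 1)) * Rpower F p / Rpower L (p - 1))
    with (Rpower F p * / (Rpower K (p - 1) * Rpower L (p - 1)) / 2) by (field; lra).
  apply Rle_trans with (Rpower (G_abs t) p * / (Rpower K (p - 1) * Rpower L (p - 1)) / 2);
    [|lra].
  apply Rmult_le_compat_r; [lra|]. apply Rmult_le_compat_r; auto.
  apply Rlt_le, Rinv_0_lt_compat, Rmult_lt_0_compat; auto.
Qed.

End FixedHorizon.

Lemma Fcal_estimates Cphi t : 0 < Cphi -> (forall s, phi s <= Cphi * exp (s / (2 * M))) ->
  in_time T t ->
  0 <= Fcal M p r phi g eps vt t /\
  Fcal M p r phi g eps vt t <= RintR (fun s => psi M phi t s * vt t s) /\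
  exists l, derivable_within (in_time T) (Fcal M p r phi g eps vt) t l /\
    / (2 * Rpower (weight_const M R0 Cphi) (p - 1)) * rpow (Fcal M p r phi g eps vt t) p
      / Rpower (t + R0) (p - 1) <= l.
Proof.
  intros HC Hphi_le Ht. unfold in_time in Ht.
  (* [t] must lie strictly inside the horizon [[0, t1]] *)
  set (t1 := (t + T) / 2).
  assert (Ht1 : 0 <= t1 < T) by (unfold t1; lra).
  assert (Htt : 0 <= t < t1) by (unfold t1; lra).
  destruct (Fcal_bounds t1 Ht1 t Htt) as [HF0 HFG].
  split; [|split].
  - exact HF0.
  - change (fun s => psi M phi t s * vt t s) with (dens_G t).
    rewrite (RintR_dens_G t1); auto; lra.
  - exists (/ 2 * N_ext t1 t). split.
    + apply Fcal_derivable; auto.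
    + apply Fcal_derivative_lower; auto.
Qed.

End Solution.

Theorem mainTheorem5 (M p R0 : R) (r : R -> R) (f g : R -> R)
  (phi dphi ddphi : R -> R) (Cphi : R) :
  0 < M -> 3 / 2 <= p <= 2 -> is_RW_inverse M r -> 0 < R0 ->
  (forall s, 0 <= f s) -> (forall s, 0 <= g s) -> (exists s, g s <> 0) ->
  (forall s, R0 < Rabs s -> f s = 0 /\ g s = 0) ->
  (forall s, derivable_pt_lim phi s (dphi s)) ->
  (forall s, derivable_pt_lim dphi s (ddphi s)) -> continuity ddphi ->
  (forall s, 0 < phi s) ->
  (forall s, - ddphi s + Wfun M r s * phi s + / (4 * M ^ 2) * phi s = 0) ->
  0 < Cphi ->
  (forall s, / Cphi * exp (s / (2 * M)) <= phi s <= Cphi * exp (s / (2 * M))) ->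
  exists C, 0 < C /\
    forall (eps T : R) (v vt vs vtt vts vss : R -> R -> R),
      0 < eps -> 0 < T ->
      is_solution M p r R0 eps f g T v vt vs vtt vts vss ->
      forall t, in_time T t ->
        0 <= Fcal M p r phi g eps vt t /\
        Fcal M p r phi g eps vt t <= RintR (fun s => psi M phi t s * vt t s) /\
        exists l, derivable_within (in_time T) (Fcal M p r phi g eps vt) t l /\
          C * rpow (Fcal M p r phi g eps vt t) p / Rpower (t + R0) (p - 1) <= l.
Proof.
  intros HM Hp Hr HR0 Hf Hg _ Hsupp Hdphi Hddphi Hcont Hpos Hode HC Hphi.
  exists (/ (2 * Rpower (weight_const M R0 Cphi) (p - 1))). split.
  - apply Rinv_0_lt_compat. pose proof (Rpower_pos (weight_const M R0 Cphi) (p - 1)). lra.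
  - intros eps T v vt vs vtt vts vss Heps HT Hsol t Ht.
    apply (Fcal_estimates M p R0 r f g phi dphi ddphi HM Hp Hr HR0 Hf Hg Hsupp Hdphi Hddphi
             Hcont Hpos Hode eps T v vt vs vtt vts vss Heps HT Hsol); auto.
    intros s; apply Hphi.
Qed.
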